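(* Let $\Bbbk$ be an algebraically closed field of characteristic $0$, let $P=\Bbbk[x_1,x_2,x_3]$ be a quadratic Poisson algebra, and let $Q=\Bbbk[y_1,y_2,y_3]$ be a Poisson algebra such that: (1) there are distinct $i,j\in\{1,2,3\}$ with $\{y_i,y_j\}=f(y_1,y_2)-r y_3$, where $f\in\Bbbk[y_1,y_2]$ is homogeneous with respect to the grading $\deg y_1=\deg y_2=1$ and $r\in\Bbbk^\times$; (2) for the remaining unordered pairs $\{k,l\}\neq\{i,j\}$ of distinct indices in $\{1,2,3\}$, the bracket $\{y_k,y_l\}$ is a scalar multiple (possibly zero) of a single monomial in $y_1,y_2,y_3$. Then $P$ is not isomorphic to $Q$ as Poisson algebras.
   Context: $P$ has the standard grading and is quadratic: $\{P_1,P_1\}\subseteq P_2$. A Poisson isomorphism is an algebra isomorphism that is also a Lie algebra isomorphism. *)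

From HB Require Import structures.
From mathcomp Require Import all_boot all_order all_algebra.
From mathcomp Require Import mpoly.
Set Implicit Arguments. Unset Strict Implicit. Unset Printing Implicit Defensive.
Import GRing.Theory.
Local Open Scope ring_scope.

(* A Poisson bracket on the polynomial algebra k[x_1..x_n] = {mpoly k[n]}:
   k-bilinear (linear in the 2nd argument + antisymmetry), antisymmetric,
   biderivation (Leibniz rule in the 2nd argument, hence in both), Jacobi. *)
Definition is_poisson_bracket (k : fieldType) (n : nat)
  (br : {mpoly k[n]} -> {mpoly k[n]} -> {mpoly k[n]}) : Prop :=
  [/\ (forall (a b c : {mpoly k[n]}) (l : k), br a (l *: b + c) = l *: br a b + br a c),
      (forall a b, br a b = - br b a),
      (forall a b c, br a (b * c) = br a b * c + b * br a c)
    & (forall a b c, br a (br b c) + br b (br c a) + br c (br a b) = 0)].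

(* Quadratic Poisson algebra: {P_1, P_1} \subseteq P_2 for the standard grading,
   i.e. each bracket of two generators is homogeneous of total degree 2 (or 0). *)
Definition quadratic_bracket (k : fieldType) (n : nat)
  (br : {mpoly k[n]} -> {mpoly k[n]} -> {mpoly k[n]}) : Prop :=
  forall a b : 'I_n, br 'X_a 'X_b \is 2.-homog.

Definition poisson_iso (k : fieldType) (n : nat)
  (brP brQ : {mpoly k[n]} -> {mpoly k[n]} -> {mpoly k[n]})
  (phi : {mpoly k[n]} -> {mpoly k[n]}) : Prop :=
  [/\ (forall (a b : {mpoly k[n]}) (l : k), phi (l *: a + b) = l *: phi a + phi b),
      (forall a b, phi (a * b) = phi a * phi b),
      phi 1 = 1,
      bijective phi
    & (forall a b, phi (brP a b) = brQ (phi a) (phi b))].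

From HB Require Import structures.
From mathcomp Require Import all_boot all_order all_algebra.
From mathcomp Require Import mpoly.
Import GRing.Theory.
Set Implicit Arguments. Unset Strict Implicit. Unset Printing Implicit Defensive.
Local Open Scope ring_scope.

(* In a quadratic Poisson algebra P the brackets of the generators lie in m^2,
   m the maximal ideal of the origin; since the bracket is a biderivation and
   m^2 is an ideal, every bracket of P lies in m^2.  A Poisson isomorphism
   P -> Q maps m onto the maximal ideal of some point a, so every bracket of Q
   would vanish to second order at a.  But the y_3-derivative of
   {y_i, y_j} = f(y_1, y_2) - r y_3 is the nonzero constant -r. *)

Section LinearMaps.
Variables (k : fieldType) (U V : lmodType k) (f : U -> V).
Hypothesis f_linear : forall (u v : U) (l : k), f (l *: u + v) = l *: f u + f v.

Lemma linD : {morph f : u v / u + v}.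
Proof. by move=> u v; rewrite -[u]scale1r f_linear !scale1r. Qed.

Lemma lin0 : f 0 = 0.
Proof. by apply: (@addrI _ (f 0)); rewrite -linD !addr0. Qed.

Lemma linZ l u : f (l *: u) = l *: f u.
Proof. by rewrite -[l *: u]addr0 f_linear lin0 addr0. Qed.

Lemma can_linear (g : V -> U) : cancel f g -> cancel g f ->
  forall (v w : V) (l : k), g (l *: v + w) = l *: g v + g w.
Proof. by move=> fK gK v w l; apply: (can_inj fK); rewrite f_linear !gK. Qed.

End LinearMaps.

Definition ideal_pred (R : comPzRingType) (I : R -> Prop) : Prop :=
  [/\ I 0, forall p q, I p -> I q -> I (p + q) & forall g p, I p -> I (g * p)].

Section Ideals.
Variables (R : comPzRingType) (I : R -> Prop).
Hypothesis I_ideal : ideal_pred I.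

Lemma ideal0 : I 0.
Proof. by case: I_ideal. Qed.

Lemma idealD p q : I p -> I q -> I (p + q).
Proof. by case: I_ideal => _ ID _; apply: ID. Qed.

Lemma idealMl g p : I p -> I (g * p).
Proof. by case: I_ideal => _ _ IM; apply: IM. Qed.

Lemma idealMr g p : I p -> I (p * g).
Proof. by rewrite mulrC; apply: idealMl. Qed.

Lemma idealN p : I p -> I (- p).
Proof. by rewrite -mulN1r; apply: idealMl. Qed.

Lemma ideal_preim (S : comPzRingType) (phi : S -> R) :
  {morph phi : p q / p + q} -> {morph phi : p q / p * q} ->
  ideal_pred (fun p => I (phi p)).
Proof.
move=> phiD phiM; have phi0 : phi 0 = 0.
  by apply: (@addrI _ (phi 0)); rewrite -phiD !addr0.
split=> [|p q Ip Iq|g p Ip].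
- by rewrite phi0; apply: ideal0.
- by rewrite phiD; apply: idealD.
- by rewrite phiM; apply: idealMl.
Qed.

End Ideals.

Section Polynomials.
Variables (k : fieldType) (n : nat).
Implicit Types (p q : {mpoly k[n]}) (a : 'I_n -> k).

Lemma mpoly_gen_ind (G : {mpoly k[n]} -> Prop) :
  G 1 -> (forall s, G 'X_s) ->
  (forall p q, G p -> G q -> G (p + q)) -> (forall p q, G p -> G q -> G (p * q)) ->
  (forall c p, G p -> G (c *: p)) ->
  forall p, G p.
Proof.
move=> G1 GX GD GM GZ; elim/mpolyind => [|c m p _ _ Gp].
  by have := GZ 0 1 G1; rewrite scale0r.
apply: GD => //; apply: GZ; rewrite mpolyXE_id; apply: big_ind => // s _.
by elim: (m s) => [|e IH]; rewrite ?expr0 // exprS; apply: GM.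
Qed.

Lemma idealZ (I : {mpoly k[n]} -> Prop) : ideal_pred I -> forall c p, I p -> I (c *: p).
Proof. by move=> I_ideal c p; rewrite -mul_mpolyC; apply: idealMl. Qed.

Lemma mdeg_eq2 (m : 'X_{1..n}) : mdeg m = 2%N -> exists s t, m = (U_(s) + U_(t))%MM.
Proof.
move=> m2; have [s ms] : exists s, m s != 0%N.
  apply/existsP; apply: contraT; rewrite negb_exists => /forallP m0.
  suff m0E : m = 0%MM by move: m2; rewrite m0E mdeg0.
  by apply/mnmP => i; rewrite mnm0E; apply/eqP; rewrite -[_ == _]negbK m0.
have mE : m = (U_(s) + (m - U_(s)))%MM.
  apply/mnmP => i; rewrite mnmDE mnmBE mnm1E.
  by case: (eqVneq s i) => [<-|_] /=; rewrite ?add1n ?subn1 ?prednK ?lt0n ?add0n ?subn0.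
have /mdeg1P [t /eqP mt] : mdeg (m - U_(s))%MM == 1%N.
  by move: m2; rewrite {1}mE mdegD mdeg1 add1n => [[->]].
by exists s, t; rewrite {1}mE mt.
Qed.

Lemma ideal_dhomog2 (I : {mpoly k[n]} -> Prop) : ideal_pred I ->
  (forall s t, I ('X_s * 'X_t)) -> forall p, p \is 2.-homog -> I p.
Proof.
move=> I_ideal IXX p /dhomogP p2; rewrite [p]mpolyE big_seq.
apply: big_ind => [|q q'|m /p2 /mdeg_eq2 [s [t ->]]]; first exact: ideal0.
  exact: idealD.
by rewrite mpolyXD; apply: (idealZ I_ideal).
Qed.

Lemma mpoly_char_meval (chi : {mpoly k[n]} -> k) :
  {morph chi : p q / p + q} -> (forall c p, chi (c *: p) = c * chi p) ->
  {morph chi : p q / p * q} -> chi 1 = 1 ->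
  forall p, chi p = p.@[fun s => chi 'X_s].
Proof.
move=> chiD chiZ chiM chi1; apply: mpoly_gen_ind => [|s|p q|p q|c p].
- by rewrite chi1 meval1.
- by rewrite mevalXU.
- by rewrite chiD mevalD => -> ->.
- by rewrite chiM mevalM => -> ->.
- by rewrite chiZ mevalZ => ->.
Qed.

Lemma mpoly_iso_meval0 (phi : {mpoly k[n]} -> {mpoly k[n]}) :
  (forall p q l, phi (l *: p + q) = l *: phi p + phi q) ->
  {morph phi : p q / p * q} -> phi 1 = 1 -> bijective phi ->
  exists a, forall p, (phi p).@[a] = p.@[fun _ => 0].
Proof.
move=> phiL phiM phi1 [psi phiK psiK].
have psiL := can_linear phiL phiK psiK.
have psiM : {morph psi : p q / p * q}.
  by move=> p q; apply: (can_inj phiK); rewrite phiM !psiK.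
pose chi q := (psi q).@[fun _ => 0].
exists (fun s => chi 'X_s) => p; rewrite -(@mpoly_char_meval chi) /chi ?phiK //.
- by move=> q q'; rewrite (linD psiL) mevalD.
- by move=> c q; rewrite (linZ psiL) mevalZ.
- by move=> q q'; rewrite psiM mevalM.
- by rewrite -{1}phi1 phiK meval1.
Qed.

Definition vanishes2 a p : Prop := p.@[a] = 0 /\ forall s, (mderiv s p).@[a] = 0.

Lemma vanishes2_ideal a : ideal_pred (vanishes2 a).
Proof.
split=> [|p q [p0 dp0] [q0 dq0]|g p [p0 dp0]].
- by split=> [|s]; rewrite ?mderiv0 meval0.
- by split=> [|s]; rewrite ?mderivD mevalD ?p0 ?q0 ?dp0 ?dq0 addr0.
- by split=> [|s]; rewrite ?mderivM ?mevalD !mevalM ?p0 ?dp0 ?mulr0 ?addr0.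
Qed.

Lemma vanishes2M a p q : p.@[a] = 0 -> q.@[a] = 0 -> vanishes2 a (p * q).
Proof.
by move=> p0 q0; split=> [|s]; rewrite ?mderivM ?mevalD !mevalM p0 q0 !(mulr0, mul0r, addr0).
Qed.

Lemma mderiv_eq0 s p : (forall m, m \in msupp p -> m s = 0%N) -> mderiv s p = 0.
Proof.
move=> ps; rewrite [p]mpolyE (big_morph _ (mderivD s) (mderiv0 _ s)).
rewrite big1_seq // => m /andP[_ /ps ms].
by rewrite mderivZ mderivX ms scale0r scaler0.
Qed.

Lemma mderivXU s : mderiv s ('X_s : {mpoly k[n]}) = 1.
Proof.
rewrite mderivX mnm1E eqxx scale1r -mpolyX0; congr 'X_[_].
by apply/mnmP => i; rewrite mnmBE subnn mnm0E.
Qed.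

End Polynomials.

Section BracketIdeal.
Variables (k : fieldType) (n : nat) (br : {mpoly k[n]} -> {mpoly k[n]} -> {mpoly k[n]}).
Hypothesis br_linear : forall a b c l, br a (l *: b + c) = l *: br a b + br a c.
Hypothesis br_antisym : forall a b, br a b = - br b a.
Hypothesis br_leibniz : forall a b c, br a (b * c) = br a b * c + b * br a c.
Variable I : {mpoly k[n]} -> Prop.
Hypothesis I_ideal : ideal_pred I.

Lemma bracket_ideal_r a : (forall v, I (br a 'X_v)) -> forall b, I (br a b).
Proof.
move=> IX; apply: mpoly_gen_ind => [|//|p q Ip Iq|p q Ip Iq|c p Ip].
- have := br_leibniz a 1 1; rewrite !mulr1 mul1r -{1}[br a 1]addr0 => /addrI <-.
  exact: ideal0.
- by rewrite (linD (br_linear a)); apply: (idealD I_ideal).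
- by rewrite br_leibniz; apply: (idealD I_ideal); [apply: idealMr | apply: idealMl].
- by rewrite (linZ (br_linear a)); apply: (idealZ I_ideal).
Qed.

Lemma bracket_ideal : (forall u v, I (br 'X_u 'X_v)) -> forall a b, I (br a b).
Proof.
move=> IX a; apply: bracket_ideal_r => v.
by rewrite br_antisym; apply: (idealN I_ideal); apply: bracket_ideal_r.
Qed.

End BracketIdeal.

(* Variables indexed by 'I_3: 'X_0, 'X_1, 'X_2 stand for x_1,x_2,x_3 (resp. y_1,y_2,y_3). *)
Theorem lemma2p2 (k : closedFieldType) (char0 : [pchar k] =i pred0)
  (brP brQ : {mpoly k[3]} -> {mpoly k[3]} -> {mpoly k[3]})
  (hP : is_poisson_bracket brP) (hPq : quadratic_bracket brP)
  (hQ : is_poisson_bracket brQ)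
  (i j : 'I_3) (hij : i != j)
  (f : {mpoly k[3]}) (d : nat) (r : k)
  (hf2 : forall m, m \in msupp f -> m (2 : 'I_3) = 0%N)
  (hfd : f \is d.-homog)
  (hr : r != 0)
  (hQij : brQ 'X_i 'X_j = f - r *: 'X_(2 : 'I_3))
  (hQkl : forall kk l : 'I_3, kk != l ->
          ~~ (((kk == i) && (l == j)) || ((kk == j) && (l == i))) ->
          exists (c : k) (m : 'X_{1..3}), brQ 'X_kk 'X_l = c *: 'X_[m]) :
  ~ (exists phi, poisson_iso brP brQ phi).
Proof.
case=> phi [phiL phiM phi1 phi_bij phi_br].
have [a phi_meval0] := mpoly_iso_meval0 phiL phiM phi1 phi_bij.
have [psi _ psiK] := phi_bij.
have [brP_linear brP_antisym brP_leibniz _] := hP.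
pose I p := vanishes2 a (phi p).
have I_ideal : ideal_pred I.
  exact: (ideal_preim (vanishes2_ideal a) (linD phiL) phiM).
have I_XX s t : I ('X_s * 'X_t).
  by rewrite /I phiM; apply: vanishes2M; rewrite phi_meval0 mevalXU.
have I_brP : forall p q, I (brP p q).
  apply: (bracket_ideal brP_linear brP_antisym brP_leibniz I_ideal) => u v.
  by apply: (ideal_dhomog2 I_ideal I_XX); apply: hPq.
have [_ /(_ 2)] := I_brP (psi 'X_i) (psi 'X_j).
rewrite phi_br !psiK hQij mderivB mderivZ mderivXU (mderiv_eq0 hf2).
rewrite sub0r mevalN mevalZ meval1 mulr1 => /eqP.
by rewrite oppr_eq0 (negbTE hr).
Qed.
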